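(* Let $\mathcal N=\{\mathbb 1\}\cup\bigcup_{i=1}^{n-1}\{U^{(1)}_{2,1}U^{(2)}_{3,2}\cdots U^{(i)}_{i+1,i}:U^{(j)}\in\{\mathrm{SWAP},\mathrm{CNOT}\}\}$, where the $U^{(j)}$ are chosen independently. Then $$M=\sum_{z\in\mathbb{F}_2^n}|\hat Z_z)(\hat Z_z|=|\hat{\mathbb 1})(\hat{\mathbb 1}|+\sum_{g\in\mathcal N}\omega(g)^\dagger|\hat Z_1)(\hat Z_1|\omega(g).$$
   Context: $d=2^n$; $(A|B)=\mathrm{Tr}(A^\dagger B)$; $|A)(B|$ is the superoperator $C\mapsto(B|C)A$; products of superoperators are compositions. $\omega(g)(A)=gAg^\dagger$, $\omega(g)^\dagger(A)=g^\dagger Ag$. $M=\sum_{x\in\mathbb{F}_2^n}|E_x)(E_x|$ with $E_x=|x\rangle\langle x|$. $Z_z=\bigotimes_iZ^{z_i}$, $\hat Z_z=Z_z/\sqrt d$, $\hat{\mathbb 1}=\mathbb 1/\sqrt d$, $Z_1=Z\otimes\mathbb 1^{\otimes(n-1)}$. For a two-qubit unitary $U$, $U_{i,j}$ denotes $U$ applied to the ordered qubit pair $(i,j)$; in particular $\mathrm{CNOT}_{j+1,j}$ has control qubit $j+1$ and target qubit $j$. *)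

From HB Require Import structures.
From mathcomp Require Import all_boot all_order all_algebra.
From mathcomp Require Import algC.
Set Implicit Arguments. Unset Strict Implicit. Unset Printing Implicit Defensive.
Import Order.TTheory GRing.Theory Num.Theory.
Local Open Scope ring_scope.

(* Operators on n qubits: 'M[algC]_(2^n).  Basis index k : 'I_(2^n)
   encodes |x_1 ... x_n> with qubit 1 the most significant bit
   (qubit 1 = first tensor factor).  Qubits are numbered 1..n. *)
Definition qbit (n : nat) (k : 'I_(2 ^ n)) (q : nat) : bool :=
  odd (k %/ 2 ^ (n - q)).

Definition adj (n : nat) (A : 'M[algC]_(2 ^ n)) : 'M[algC]_(2 ^ n) :=
  (map_mx Num.conj A)^T.

Definition hs (n : nat) (A B : 'M[algC]_(2 ^ n)) : algC := \tr (adj A *m B).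

(* the superoperator |A)(B| : C |-> (B|C) A *)
Definition kb (n : nat) (A B : 'M[algC]_(2 ^ n)) : 'M[algC]_(2 ^ n) -> 'M[algC]_(2 ^ n) :=
  fun C => hs B C *: A.

Definition omega (n : nat) (g : 'M[algC]_(2 ^ n)) : 'M[algC]_(2 ^ n) -> 'M[algC]_(2 ^ n) :=
  fun A => g *m A *m adj g.
Definition omega_dag (n : nat) (g : 'M[algC]_(2 ^ n)) : 'M[algC]_(2 ^ n) -> 'M[algC]_(2 ^ n) :=
  fun A => adj g *m A *m g.

Definition Ebasis (n : nat) (x : 'I_(2 ^ n)) : 'M[algC]_(2 ^ n) := delta_mx x x.

Definition Msup (n : nat) (C : 'M[algC]_(2 ^ n)) : 'M[algC]_(2 ^ n) :=
  \sum_(x : 'I_(2 ^ n)) kb (Ebasis x) (Ebasis x) C.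

(* Z_z = tensor_i Z^{z_i}; z i is the exponent on qubit i.+1.
   Entry-wise: diagonal with entries prod_i (-1)^{z_i x_i}. *)
Definition Zz (n : nat) (z : {ffun 'I_n -> bool}) : 'M[algC]_(2 ^ n) :=
  diag_mx (\row_(k < 2 ^ n)
    \prod_(i < n) (if z i && qbit k i.+1 then (-1 : algC) else 1)).

Definition sqd (n : nat) : algC := sqrtC (2 ^ n)%:R.

Definition Zhat (n : nat) (z : {ffun 'I_n -> bool}) : 'M[algC]_(2 ^ n) :=
  (sqd n)^-1 *: Zz z.
Definition Ihat (n : nat) : 'M[algC]_(2 ^ n) := (sqd n)^-1 *: 1%:M.

(* Z_1 = Z (x) 1^{(n-1)} : z = indicator of qubit 1 *)
Definition z1 (n : nat) : {ffun 'I_n -> bool} := [ffun i : 'I_n => (i : nat) == 0%N].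
Definition Zhat1 (n : nat) : 'M[algC]_(2 ^ n) := Zhat (z1 n).

Definition basis_gate (n : nat) (f : (nat -> bool) -> nat -> bool) : 'M[algC]_(2 ^ n) :=
  \matrix_(k, l) (if [forall m : 'I_n, qbit k m.+1 == f (qbit l) m.+1] then 1 else 0).

Definition SWAP (n i j : nat) : 'M[algC]_(2 ^ n) :=
  basis_gate n (fun b m => b (if m == i then j else if m == j then i else m)).

(* CNOT_{c,t} : control qubit c, target qubit t *)
Definition CNOT (n c t : nat) : 'M[algC]_(2 ^ n) :=
  basis_gate n (fun b m => if m == t then addb (b t) (b c) else b m).

Definition gate_of (n : nat) (cnot : bool) (i j : nat) : 'M[algC]_(2 ^ n) :=
  if cnot then CNOT n i j else SWAP n i j.

(* U^(1)_{2,1} U^(2)_{3,2} ... U^(i)_{i+1,i}, for choices U : 'I_i -> bool *)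
Definition chain (n i : nat) (U : {ffun 'I_i -> bool}) : 'M[algC]_(2 ^ n) :=
  \prod_(j < i) gate_of n (U j) j.+2 j.+1.

Definition Nterm (n : nat) (g C : 'M[algC]_(2 ^ n)) : 'M[algC]_(2 ^ n) :=
  omega_dag g (kb (Zhat1 n) (Zhat1 n) (omega g C)).

From HB Require Import structures.
From mathcomp Require Import all_boot all_order all_algebra.
From mathcomp Require Import perm algC ring.
Set Implicit Arguments. Unset Strict Implicit. Unset Printing Implicit Defensive.
Import GRing.Theory Num.Theory.
Local Open Scope ring_scope.

(* Both sides of the first identity map C to its diagonal part: for M this is
   immediate, and for the sum over z it is the orthogonality relation
   sum_z (-1)^(z.x) (-1)^(z.y) = 2^n [x = y] of the characters of F_2^n.
   For the second, sort the nonzero z by the qubit i+1 carrying their last 1.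
   Conjugating Z_1 successively by U^(1)_{2,1}, ..., U^(i)_{i+1,i}, a SWAP
   moves the Z on qubit j to qubit j+1 while a CNOT copies it there, so
   chain^dagger Z_1 chain = Z_z with z = (U^(1), ..., U^(i), 1, 0, ..., 0)
   (CNOT read as 1); these are exactly the z whose last 1 is on qubit i+1.
   Finally omega(g)^dagger |A)(A| omega(g) = |B)(B| with B = g^dagger A g. *)

Definition qubits (n : nat) : pred nat := [pred q | 0 < q <= n]%N.

Lemma qubitsE n q : (q \in qubits n) = (0 < q <= n)%N.
Proof. by []. Qed.

Lemma qubitsS n q : q \in qubits n -> q \in qubits n.+1.
Proof. by rewrite !qubitsE => /andP[-> /leqW]. Qed.

Lemma odd_div_expS n k q : (q <= n)%N ->
  odd (k %/ 2 ^ (n.+1 - q)) = odd (k./2 %/ 2 ^ (n - q)).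
Proof. by move=> hq; rewrite subSn // expnS divnMA divn2. Qed.

Lemma odd_div_exp0 n k : odd (k %/ 2 ^ (n - n)) = odd k.
Proof. by rewrite subnn expn0 divn1. Qed.

Fixpoint nat_of_bits (n : nat) (b : nat -> bool) : nat :=
  if n is n'.+1 then (b n + (nat_of_bits n' b).*2)%N else 0%N.

Lemma nat_of_bits_lt n b : (nat_of_bits n b < 2 ^ n)%N.
Proof.
elim: n => [//|n IH] /=; rewrite expnS mul2n.
by case: (b n.+1); rewrite /= ?add1n ?add0n ?ltn_Sdouble ?ltn_double.
Qed.

Lemma nat_of_bitsK n b :
  {in qubits n, forall q, odd (nat_of_bits n b %/ 2 ^ (n - q)) = b q}.
Proof.
elim: n => [|n IH] q; rewrite qubitsE => /andP[q_gt0]; first by rewrite leqNgt q_gt0.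
rewrite leq_eqVlt => /orP[/eqP-> | q_le_n] /=.
  by rewrite odd_div_exp0 oddD odd_double addbF oddb.
by rewrite odd_div_expS // half_bit_double IH // qubitsE q_gt0.
Qed.

Lemma bits_inj n a b : (a < 2 ^ n)%N -> (b < 2 ^ n)%N ->
  {in qubits n, forall q, odd (a %/ 2 ^ (n - q)) = odd (b %/ 2 ^ (n - q))} -> a = b.
Proof.
elim: n a b => [|n IH] a b ha hb eq_ab.
  by move: ha hb; rewrite expn0 !ltnS !leqn0 => /eqP-> /eqP->.
have lt_half c : (c < 2 ^ n.+1)%N -> (c./2 < 2 ^ n)%N.
  by rewrite -divn2 ltn_divLR // mulnC -expnS.
have eq_half : a./2 = b./2.
  apply: IH => [||q qn]; rewrite ?lt_half //.
  have q_le_n : (q <= n)%N by case/andP: qn.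
  by rewrite -(odd_div_expS a q_le_n) -(odd_div_expS b q_le_n) eq_ab ?qubitsS.
have eq_odd : odd a = odd b.
  by rewrite -(odd_div_exp0 n.+1 a) -(odd_div_exp0 n.+1 b) eq_ab // qubitsE ltnSn.
by rewrite -(odd_double_half a) -(odd_double_half b) eq_half eq_odd.
Qed.

Definition of_bits (n : nat) (b : nat -> bool) : 'I_(2 ^ n) :=
  Ordinal (nat_of_bits_lt n b).

Lemma qbit_of_bits n b : {in qubits n, qbit (of_bits n b) =1 b}.
Proof. by move=> q /(nat_of_bitsK b); rewrite /qbit /=. Qed.

Lemma qbit_inj n (a b : 'I_(2 ^ n)) : {in qubits n, qbit a =1 qbit b} -> a = b.
Proof. by move=> eq_ab; apply/val_inj/(bits_inj (ltn_ord a) (ltn_ord b)). Qed.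

Lemma forall_qbitP n (a : 'I_(2 ^ n)) (b : nat -> bool) :
  reflect {in qubits n, qbit a =1 b} [forall m : 'I_n, qbit a m.+1 == b m.+1].
Proof.
apply: (iffP forallP) => [eq_ab q | eq_ab m]; last by apply/eqP/eq_ab; rewrite qubitsE /=.
rewrite qubitsE => /andP[q_gt0 q_le_n]; have q_lt : (q.-1 < n)%N by rewrite prednK.
by have /eqP := eq_ab (Ordinal q_lt); rewrite /= prednK.
Qed.

Definition zsign (n : nat) (z : {ffun 'I_n -> bool}) (b : nat -> bool) : algC :=
  \prod_(i < n) (if z i && b i.+1 then -1 else 1).

Lemma ZzE n z (k l : 'I_(2 ^ n)) : Zz z k l = zsign z (qbit k) *+ (k == l).
Proof. by rewrite !mxE. Qed.

Lemma eq_zsign n z b b' : {in qubits n, b =1 b'} -> @zsign n z b = zsign z b'.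
Proof. by move=> eq_b; apply: eq_bigr => i _; rewrite eq_b // qubitsE /=. Qed.

Lemma conj_zsign n z b : (@zsign n z b)^* = zsign z b.
Proof.
by rewrite rmorph_prod; apply: eq_bigr => i _; case: ifP; rewrite ?rmorphN rmorph1.
Qed.

Lemma zsign0 n b : zsign [ffun _ : 'I_n => false] b = 1.
Proof. by rewrite /zsign big1 // => i _; rewrite ffunE. Qed.

Lemma sum_zsign_mul n (x y : 'I_(2 ^ n)) :
  \sum_(z : {ffun 'I_n -> bool}) zsign z (qbit x) * zsign z (qbit y) =
    (2 ^ n)%:R *+ (x == y).
Proof.
pose sgn (b : bool) : algC := if b then -1 else 1.
pose F (i : 'I_n) (c : bool) := sgn (c && qbit x i.+1) * sgn (c && qbit y i.+1).
rewrite (eq_bigr (fun z : {ffun 'I_n -> bool} => \prod_i F i (z i))); last first.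
  by move=> z _; rewrite /zsign -big_split.
rewrite -(bigA_distr_bigA F) /F.
under eq_bigr => i _ do rewrite big_bool /= mulr1.
have [<- | neq_xy] := eqVneq x y.
  rewrite (eq_bigr (fun _ => 2%:R)) ?prodr_const ?card_ord ?natrX // => i _.
  by rewrite /sgn; case: (qbit x i.+1); rewrite ?mulrNN mulr1.
have : ~~ [forall m : 'I_n, qbit x m.+1 == qbit y m.+1].
  by apply: contra_neqN neq_xy => /forall_qbitP/qbit_inj.
rewrite negb_forall => /existsP[m /eqP neq_m].
rewrite (bigD1 m) //= /sgn.
by case: (qbit x m.+1) (qbit y m.+1) neq_m => [] [] // _;
  rewrite ?mulr1 ?mul1r addNr mul0r.
Qed.

Lemma adjM n (A B : 'M[algC]_(2 ^ n)) : adj (A *m B) = adj B *m adj A.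
Proof. by rewrite /adj map_mxM trmx_mul. Qed.

Lemma adjK n : involutive (@adj n).
Proof. by move=> A; apply/matrixP => i j; rewrite !mxE conjCK. Qed.

Lemma adj_scalemx n a (A : 'M[algC]_(2 ^ n)) : adj (a *: A) = a^* *: adj A.
Proof. by apply/matrixP => i j; rewrite !mxE rmorphM. Qed.

Lemma adj_mx1 n : adj (1%:M : 'M[algC]_(2 ^ n)) = 1%:M.
Proof. by rewrite /adj map_scalar_mx rmorph1 tr_scalar_mx. Qed.

Lemma adj_Zz n z : adj (@Zz n z) = Zz z.
Proof.
apply/matrixP => k l; rewrite !mxE -!/(zsign _ _) eq_sym.
by have [-> | _] := eqVneq l k; rewrite ?conj_zsign ?rmorph0.
Qed.

Lemma conj_inv_sqd n : ((sqd n)^-1)^* = (sqd n)^-1.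
Proof. by apply: geC0_conj; rewrite invr_ge0 sqrtC_ge0 ler0n. Qed.

Lemma adj_Zhat n z : adj (@Zhat n z) = Zhat z.
Proof. by rewrite adj_scalemx conj_inv_sqd adj_Zz. Qed.

Lemma inv_sqd_sqr n : (sqd n)^-1 ^+ 2 = ((2 ^ n)%:R)^-1.
Proof. by rewrite exprVn sqrtCK. Qed.

Lemma hs_Ebasis n x (C : 'M[algC]_(2 ^ n)) : hs (Ebasis x) C = C x x.
Proof.
rewrite /hs /adj /Ebasis map_delta_mx trmx_delta /mxtrace.
rewrite (bigD1 x) //= big1 => [|i neq_ix]; last first.
  by rewrite !mxE big1 // => j _; rewrite !mxE (negbTE neq_ix) mul0r.
rewrite !mxE (bigD1 x) //= big1 => [|j /negbTE neq_jx]; last by rewrite !mxE neq_jx andbF mul0r.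
by rewrite !mxE !eqxx mul1r !addr0.
Qed.

Lemma hs_Zhat n z (C : 'M[algC]_(2 ^ n)) :
  hs (Zhat z) C = (sqd n)^-1 * \sum_y zsign z (qbit y) * C y y.
Proof.
rewrite /hs adj_Zhat /Zhat -scalemxAl mxtraceZ; congr (_ * _).
by apply: eq_bigr => y _; rewrite mul_diag_mx !mxE.
Qed.

Definition diag_part (R : nmodType) n (C : 'M[R]_n) : 'M[R]_n :=
  \matrix_(a, b) (C a a *+ (a == b)).

Lemma Msup_diag_part n (C : 'M[algC]_(2 ^ n)) : Msup C = diag_part C.
Proof.
apply/matrixP => a b; rewrite /Msup /kb summxE (bigD1 a) //= big1 => [|x neq_xa].
  by rewrite !mxE hs_Ebasis eqxx addr0 mulr_natr eq_sym.
by rewrite !mxE (eq_sym a) (negbTE neq_xa) mulr0.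
Qed.

Lemma sum_kb_Zhat_diag_part n (C : 'M[algC]_(2 ^ n)) :
  \sum_(z : {ffun 'I_n -> bool}) kb (Zhat z) (Zhat z) C = diag_part C.
Proof.
apply/matrixP => a b; rewrite /kb summxE !mxE.
have [<- | neq_ab] := eqVneq a b; last first.
  by rewrite mulr0n big1 // => z _; rewrite !mxE (negbTE neq_ab) mulr0n !mulr0.
have termE y : \sum_(z : {ffun 'I_n -> bool})
      (sqd n)^-1 * (zsign z (qbit y) * C y y) * ((sqd n)^-1 * zsign z (qbit a)) =
    (sqd n)^-1 ^+ 2 * C y y * ((2 ^ n)%:R *+ (y == a)).
  by rewrite -sum_zsign_mul mulr_sumr; apply: eq_bigr => z _; ring.
under eq_bigr => z _ do rewrite !mxE eqxx mulr1n -/(zsign z _) hs_Zhat mulr_sumr mulr_suml.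
rewrite exchange_big /=; under eq_bigr => y _ do rewrite termE.
rewrite (bigD1 a) //= eqxx big1 => [|y /negbTE ->]; last by rewrite mulr0n mulr0.
rewrite addr0 !mulr1n inv_sqd_sqr mulrAC mulVf ?mul1r //.
by rewrite pnatr_eq0 -lt0n expn_gt0.
Qed.

Lemma basis_gateE n f (k l : 'I_(2 ^ n)) :
  basis_gate n f k l = (k == of_bits n (f (qbit l)))%:R.
Proof.
rewrite mxE; case: forall_qbitP => [eq_k | neq_k]; case: eqP => [eq_kl | neq_kl] //.
  by case: neq_kl; apply: qbit_inj => q q_in; rewrite eq_k // qbit_of_bits.
by case: neq_k => q q_in; rewrite eq_kl qbit_of_bits.
Qed.

Lemma conj_basis_gate_Zz n f (z z' : {ffun 'I_n -> bool}) :
  (forall b b', {in qubits n, f b =1 f b'} -> {in qubits n, b =1 b'}) ->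
  (forall b, zsign z (f b) = zsign z' b) ->
  adj (basis_gate n f) *m Zz z *m basis_gate n f = Zz z'.
Proof.
move=> f_inj zsign_f; pose s (l : 'I_(2 ^ n)) := of_bits n (f (qbit l)).
(* [basis_gate n f] is the permutation matrix of [s]. *)
have s_inj : injective s.
  move=> k l eq_s; apply/qbit_inj/f_inj => q q_in.
  rewrite -(@qbit_of_bits n (f (qbit k))) // -(@qbit_of_bits n (f (qbit l))) //.
  by rewrite -/(s k) eq_s.
have GE : forall k l, basis_gate n f k l = (k == s l)%:R := @basis_gateE n f.
move: (basis_gate n f) GE => G GE.
have rowE k x : (adj G *m Zz z) k x = (x == s k)%:R * zsign z (qbit x).
  by rewrite /Zz mul_mx_diag !mxE GE rmorph_nat.
apply/matrixP => k l; rewrite ZzE mxE; under eq_bigr => x _ do rewrite rowE GE.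
rewrite (bigD1 (s k)) //= big1 => [|x /negbTE ->]; last by rewrite !mul0r.
rewrite eqxx mul1r addr0 (inj_eq s_inj) mulr_natr.
by rewrite (eq_zsign z (b' := f (qbit k))) ?zsign_f // => q; apply: qbit_of_bits.
Qed.

Lemma eq_prod_off2 (I : finType) (R : comPzSemiRingType) (p q : I) (F G : I -> R) :
  p != q -> (forall m, m != p -> m != q -> F m = G m) -> F p * F q = G p * G q ->
  \prod_m F m = \prod_m G m.
Proof.
move=> neq_pq eq_FG eq_pq; have neq_qp : q != p by rewrite eq_sym.
rewrite (bigD1 p) // (bigD1 q neq_qp) [RHS](bigD1 p) // (bigD1 q neq_qp) /= !mulrA eq_pq.
by congr (_ * _); apply: eq_bigr => m /andP[neq_mp neq_mq]; apply: eq_FG.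
Qed.

Lemma eqS_ord n (u v : 'I_n) : (u.+1 == v.+1) = (u == v).
Proof. by []. Qed.

Lemma CNOT_conj_Zz n (c t : 'I_n) z : c != t ->
  adj (CNOT n c.+1 t.+1) *m Zz z *m CNOT n c.+1 t.+1 =
  Zz [ffun m => if m == c then z c (+) z t else z m].
Proof.
move=> neq_ct; have neq_tc : t != c by rewrite eq_sym.
apply: conj_basis_gate_Zz => [b b' eq_f r r_in | b].
  have /= := eq_f c.+1; rewrite eqS_ord (negbTE neq_ct) qubitsE ltn_ord => /(_ isT) eq_c.
  by have /= := eq_f r r_in; case: eqP => [-> | _] //; rewrite eq_c => /addIb.
apply: (eq_prod_off2 neq_ct) => [m neq_mc neq_mt | ].
  by rewrite ffunE eqS_ord (negbTE neq_mc) (negbTE neq_mt).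
rewrite !ffunE eqxx !eqS_ord eqxx (negbTE neq_ct) (negbTE neq_tc).
by case: (z c) (z t) (b c.+1) (b t.+1) => [] [] [] []; rewrite /= ?mulrNN ?mulr1 ?mul1r.
Qed.

Lemma SWAP_conj_Zz n (p q : 'I_n) z :
  adj (SWAP n p.+1 q.+1) *m Zz z *m SWAP n p.+1 q.+1 = Zz [ffun m => z (tperm p q m)].
Proof.
pose sw r := if r == p.+1 then q.+1 else if r == q.+1 then p.+1 else r.
have swS (m : 'I_n) : sw m.+1 = (tperm p q m).+1.
  rewrite /sw !eqS_ord.
  case: tpermP => [-> | -> | /eqP/negbTE-> /eqP/negbTE->]; rewrite ?eqxx //.
  by case: (eqVneq q p) => [-> |].
have sw_in r : r \in qubits n -> sw r \in qubits n.
  by move=> r_in; rewrite /sw; do 2?case: ifP => _; rewrite // qubitsE /= ltn_ord.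
have swK r : sw (sw r) = r.
  rewrite /sw; have [-> | neq_p] := eqVneq r p.+1.
    by rewrite eqxx; case: (eqVneq q.+1 p.+1) => [-> |].
  have [eq_q | neq_q] := eqVneq r q.+1; first by rewrite eq_q in neq_p *; rewrite eqxx.
  by rewrite (negbTE neq_p) (negbTE neq_q).
apply: conj_basis_gate_Zz => [b b' eq_f r r_in | b].
  by have := eq_f (sw r) (sw_in r r_in); rewrite -/(sw _) -/(sw (sw r)) swK.
rewrite /zsign [RHS](reindex_inj (@perm_inj _ (tperm p q))) /=.
by apply: eq_bigr => m _; rewrite ffunE tpermK -/(sw _) swS.
Qed.

Definition ffun_prefix (T : Type) i n (le_in : (i <= n)%N) (z : {ffun 'I_n -> T}) :
  {ffun 'I_i -> T} := [ffun k => z (widen_ord le_in k)].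

Definition zchain n i (U : {ffun 'I_i -> bool}) : {ffun 'I_n -> bool} :=
  [ffun m : 'I_n => if insub (val m) is Some j then U j else val m == i].

Lemma zchain_lt n i (U : {ffun 'I_i -> bool}) (m : 'I_n) (lt_mi : (m < i)%N) :
  zchain n U m = U (Ordinal lt_mi).
Proof. by rewrite ffunE insubT /=; congr (U _); apply: val_inj. Qed.

Lemma zchain_ge n i (U : {ffun 'I_i -> bool}) (m : 'I_n) :
  (i <= m)%N -> zchain n U m = (val m == i).
Proof. by move=> le_im; rewrite ffunE insubF // ltnNge le_im. Qed.

Lemma zchain_prefix n i (U : {ffun 'I_i.+1 -> bool}) (m : 'I_n) :
  val m != i -> val m != i.+1 -> zchain n (ffun_prefix (leqnSn i) U) m = zchain n U m.
Proof.
move=> neq_mi neq_mi1; case: (ltnP m i) => [lt_mi | le_im].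
  rewrite (zchain_lt _ lt_mi) (zchain_lt _ (ltn_trans lt_mi (ltnSn i))) ffunE.
  by congr (U _); apply: val_inj.
rewrite !zchain_ge ?(negbTE neq_mi) ?(negbTE neq_mi1) //.
by rewrite ltn_neqAle eq_sym neq_mi.
Qed.

Lemma ffun_prefix_zchain n i (le_in : (i <= n)%N) (U : {ffun 'I_i -> bool}) :
  ffun_prefix le_in (zchain n U) = U.
Proof.
apply/ffunP => k; rewrite ffunE (@zchain_lt n i U (widen_ord le_in k) (ltn_ord k)).
by congr (U _); apply: val_inj.
Qed.

Lemma chainS n i (U : {ffun 'I_i.+1 -> bool}) :
  chain n U = chain n (ffun_prefix (leqnSn i) U) *m gate_of n (U ord_max) i.+2 i.+1.
Proof.
rewrite /chain big_ord_recr /= -mulmxE; congr (_ *m _).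
by apply: eq_bigr => j _; rewrite ffunE.
Qed.

Lemma conj_gate_zchain n i (U : {ffun 'I_i.+1 -> bool}) : (i.+1 < n)%N ->
  let G := gate_of n (U ord_max) i.+2 i.+1 in
  adj G *m Zz (zchain n (ffun_prefix (leqnSn i) U)) *m G = Zz (zchain n U).
Proof.
move=> lt_i1n; pose c : 'I_n := Ordinal lt_i1n; pose t : 'I_n := Ordinal (ltnW lt_i1n).
have neq_tc : t != c by rewrite -val_eqE /= (ltn_eqF (ltnSn i)).
have neq_ct : c != t by rewrite eq_sym.
have zc : zchain n U c = true by rewrite zchain_ge //= eqxx.
have zt : zchain n U t = U ord_max.
  by rewrite (@zchain_lt n i.+1 U t (ltnSn i)); congr (U _); apply: val_inj.
rewrite /gate_of; case: (U ord_max) zt => zt.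
- rewrite (CNOT_conj_Zz _ neq_ct); congr Zz; apply/ffunP => m; rewrite ffunE.
  have [-> | neq_mc] := eqVneq m c.
    by rewrite zc !zchain_ge //= eqxx (gtn_eqF (ltnSn i)).
  have [-> | neq_mt] := eqVneq m t; first by rewrite zt zchain_ge //= eqxx.
  by apply: zchain_prefix; [move: neq_mt | move: neq_mc]; rewrite -val_eqE.
- rewrite (@SWAP_conj_Zz n c t); congr Zz; apply/ffunP => m; rewrite ffunE.
  case: tpermP => [-> | -> | /eqP neq_mc /eqP neq_mt].
  + by rewrite zc zchain_ge //= eqxx.
  + by rewrite zt zchain_ge //= (gtn_eqF (ltnSn i)).
  + by apply: zchain_prefix; [move: neq_mt | move: neq_mc]; rewrite -val_eqE.
Qed.

Lemma chain_conj_Z1 n i (U : {ffun 'I_i -> bool}) : (i < n)%N ->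
  adj (chain n U) *m Zz (z1 n) *m chain n U = Zz (zchain n U).
Proof.
elim: i U => [|i IH] U lt_in.
  rewrite /chain big_ord0 adj_mx1 mul1mx mulmx1; congr Zz.
  by apply/ffunP => m; rewrite zchain_ge // ffunE.
have regroup (A G : 'M[algC]_(2 ^ n)) :
    adj (A *m G) *m Zz (z1 n) *m (A *m G) = adj G *m (adj A *m Zz (z1 n) *m A) *m G.
  by rewrite adjM !mulmxA.
by rewrite chainS regroup IH ?(ltnW lt_in) // conj_gate_zchain.
Qed.

Lemma omega_dag_kb n (g A B C : 'M[algC]_(2 ^ n)) :
  adj g *m A *m g = B -> omega_dag g (kb A A (omega g C)) = kb B B C.
Proof.
move=> conjB; rewrite /omega_dag /kb /omega -scalemxAr -scalemxAl conjB; congr (_ *: _).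
by rewrite /hs -conjB !adjM adjK !mulmxA mxtrace_mulC !mulmxA.
Qed.

Lemma Nterm_chain n i (U : {ffun 'I_i -> bool}) (C : 'M[algC]_(2 ^ n)) : (i < n)%N ->
  Nterm (chain n U) C = kb (Zhat (zchain n U)) (Zhat (zchain n U)) C.
Proof.
move=> lt_in; apply: omega_dag_kb.
by rewrite /Zhat1 /Zhat -scalemxAr -scalemxAl chain_conj_Z1.
Qed.

Definition last_one n (z : {ffun 'I_n -> bool}) : nat := \max_(j < n | z j) j.+1.

Lemma last_one_le n (z : {ffun 'I_n -> bool}) : (last_one z <= n)%N.
Proof. by apply/bigmax_leqP => j _; apply: ltn_ord. Qed.

Lemma last_one_gt n (z : {ffun 'I_n -> bool}) (j : 'I_n) : z j -> (j < last_one z)%N.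
Proof. by move=> zj; apply: (leq_bigmax_cond (F := fun j : 'I_n => j.+1)). Qed.

Lemma last_one_eq0 n (z : {ffun 'I_n -> bool}) :
  (last_one z == 0%N) = (z == [ffun => false]).
Proof.
apply/idP/eqP => [/eqP z_eq0 | ->].
  by apply/ffunP => j; rewrite ffunE; apply/negbTE/negP => /last_one_gt; rewrite z_eq0.
by rewrite -leqn0; apply/bigmax_leqP => j; rewrite ffunE.
Qed.

Lemma last_one_zchain n i (U : {ffun 'I_i -> bool}) :
  (i < n)%N -> last_one (zchain n U) = i.+1.
Proof.
move=> lt_in; apply/eqP; rewrite eqn_leq; apply/andP; split.
  apply/bigmax_leqP => j; case: (ltnP i j) => [lt_ij | //].
  by rewrite zchain_ge ?(ltnW lt_ij) // gtn_eqF.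
by apply: (@last_one_gt n _ (Ordinal lt_in)); rewrite zchain_ge //= eqxx.
Qed.

Lemma zchain_prefix_last_one n i (lt_in : (i < n)%N) (z : {ffun 'I_n -> bool}) :
  last_one z = i.+1 -> zchain n (ffun_prefix (ltnW lt_in) z) = z.
Proof.
move=> last_z; apply/ffunP => j; case: (ltnP j i) => [lt_ji | le_ij].
  by rewrite zchain_lt ffunE; congr (z _); apply: val_inj.
rewrite zchain_ge //; have [eq_ji | neq_ji] := eqVneq (val j) i.
  case: (boolP (z j)) => // nz_j.
  suff : (last_one z <= i)%N by rewrite last_z ltnn.
  apply/bigmax_leqP => k z_k; rewrite ltn_neqAle; apply/andP; split.
    apply: contraTneq z_k => eq_ki.
    by have -> : k = j by apply/val_inj; rewrite /= eq_ki eq_ji.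
  by rewrite -ltnS -last_z last_one_gt.
apply/esym/negbTE/negP => /last_one_gt; rewrite last_z ltnS leqNgt.
by rewrite ltn_neqAle eq_sym neq_ji le_ij.
Qed.

Lemma sum_by_last_one n (V : nmodType) (K : {ffun 'I_n -> bool} -> V) :
  \sum_z K z =
    K [ffun => false] + \sum_(i < n) \sum_(U : {ffun 'I_i -> bool}) K (zchain n U).
Proof.
rewrite (partition_big (fun z => inord (last_one z) : 'I_n.+1) predT) //= big_ord_recl.
have last_oneK (z : {ffun 'I_n -> bool}) :
    (inord (last_one z) : 'I_n.+1) = last_one z :> nat.
  by rewrite inordK // ltnS last_one_le.
congr (_ + _).
  rewrite (eq_bigl (pred1 [ffun => false])) ?big_pred1_eq // => z.
  by rewrite -val_eqE /= last_oneK last_one_eq0.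
apply: eq_bigr => i _; have lt_in := ltn_ord i.
rewrite (eq_bigl (fun z => last_one z == i.+1)); last first.
  by move=> z; rewrite -val_eqE /= last_oneK.
rewrite (reindex_onto (@zchain n i) (ffun_prefix (ltnW lt_in))) => [|z /eqP]; last first.
  exact: zchain_prefix_last_one.
by apply: eq_bigl => U; rewrite last_one_zchain // eqxx ffun_prefix_zchain eqxx.
Qed.

Lemma Ihat_Zhat0 n : Ihat n = Zhat [ffun _ : 'I_n => false].
Proof.
rewrite /Ihat /Zhat; congr (_ *: _); apply/matrixP => k l.
by rewrite ZzE zsign0 !mxE.
Qed.

Unset Implicit Arguments.

Theorem lemma2 (n : nat) (hn : (0 < n)%N) (C : 'M[algC]_(2 ^ n)) :
  Msup C = \sum_(z : {ffun 'I_n -> bool}) kb (Zhat z) (Zhat z) C /\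
  \sum_(z : {ffun 'I_n -> bool}) kb (Zhat z) (Zhat z) C =
    kb (Ihat n) (Ihat n) C
    + (Nterm 1%:M C
       + \sum_(1 <= i < n) \sum_(U : {ffun 'I_i -> bool}) Nterm (chain n U) C).
Proof.
split; first by rewrite Msup_diag_part sum_kb_Zhat_diag_part.
rewrite sum_by_last_one Ihat_Zhat0; congr (_ + _).
pose kbZ i (U : {ffun 'I_i -> bool}) := kb (Zhat (zchain n U)) (Zhat (zchain n U)) C.
rewrite -(big_mkord xpredT (fun i => \sum_U kbZ i U)) big_ltn //; congr (_ + _).
  rewrite (eq_bigr (fun _ => Nterm 1%:M C)) => [|U _]; last first.
    by rewrite /kbZ -Nterm_chain // /chain big_ord0.
  by rewrite sumr_const card_ffun card_bool card_ord expn0.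
by apply: eq_big_nat => i /andP[_ lt_in]; apply: eq_bigr => U _; rewrite Nterm_chain.
Qed.
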